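(* Let $(X,S)$ be an association scheme with the trivial partition $S=\{\mathbf{1},\sigma\}$, where $\mathbf{1}=\{(x,x)\mid x\in X\}$ and $\sigma=(X\times X)\setminus\mathbf{1}$. Then every self-homotopy equivalence of the quasi-schemoid $\jmath(X,S)$ is an isomorphism.
   Context: An association scheme is a pair $(X,S)$ with $X$ a finite set and $S$ a partition of $X\times X$ containing $1_X=\{(x,x)\mid x\in X\}$, closed under $g\mapsto g^*=\{(y,x)\mid(x,y)\in g\}$, such that for all $e,f,g\in S$ the number $\sharp\{y\in X\mid(x,y)\in e,(y,z)\in f\}$ is the same for all $(x,z)\in g$. The quasi-schemoid $\jmath(X,S)=(\mathcal{C},S)$ has $ob(\mathcal{C})=X$, $\mathrm{Hom}_{\mathcal{C}}(y,x)=\{(x,y)\}$, composition $(z,x)\circ(x,y)=(z,y)$, and partition $S$ of $mor(\mathcal{C})=X\times X$. A quasi-schemoid is a small category with a partition of its morphisms satisfying: for blocks $\sigma,\tau,\mu$ and $f,g\in\mu$ the number of composable pairs $(a,b)\in\sigma\times\tau$ with $a\circ b=f$ equals that with $a\circ b=g$. A morphism of quasi-schemoids is a functor sending each block of the source partition into some block of the target partition. Product: $(\mathcal{C},S)\times(\mathcal{E},S')=(\mathcal{C}\times\mathcal{E},\{\sigma\times\tau\})$. $[1]$ has objects $0,1$ and one non-identity morphism $0\to1$; $I=([1],\{\{f\}\}_{f})$. A homotopy $H\colon F\Rightarrow G$ is a morphism $H\colon(\mathcal{C},S)\times I\to(\mathcal{D},S')$ with $H\circ\varepsilon_0=F$,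 $H\circ\varepsilon_1=G$ ($\varepsilon_i(a)=(a,i)$, $\varepsilon_i(f)=(f,1_i)$). $F\sim G$ if there is a homotopy $F\Rightarrow G$ or $G\Rightarrow F$; $F\simeq G$ if there is a finite chain $F=F_0\sim\cdots\sim F_n=G$. A self-homotopy equivalence of $A$ is a morphism $F\colon A\to A$ for which there exists $G\colon A\to A$ with $FG\simeq1$ and $GF\simeq1$. *)

From mathcomp Require Import all_boot.
From Stdlib Require Import Relations.

Set Implicit Arguments.
Unset Strict Implicit.
Unset Printing Implicit Defensive.

(* A small category presented by its set of morphisms (with domain,
   codomain, identities and a total composition which is only meaningful
   on composable pairs), together with a partition of its morphisms,
   encoded by the equivalence relation "lie in the same block". *)
Record qschemoid := QS {
  ob : Type;
  mor : Type;
  dom : mor -> ob;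
  cod : mor -> ob;
  idm : ob -> mor;
  comp : mor -> mor -> mor;          (* comp g f = g \o f when dom g = cod f *)
  sameblk : mor -> mor -> Prop
}.

Record qmap (A B : qschemoid) := QMap {
  fo : ob A -> ob B;
  fm : mor A -> mor B
}.

Definition is_qmorphism (A B : qschemoid) (F : qmap A B) : Prop :=
  [/\ (forall f, dom (fm F f) = fo F (dom f)),
      (forall f, cod (fm F f) = fo F (cod f)),
      (forall a, fm F (idm a) = idm (fo F a)),
      (forall f g, dom g = cod f ->
          fm F (comp g f) = comp (fm F g) (fm F f))
    & (forall f g, sameblk f g -> sameblk (fm F f) (fm F g))].

Definition qeq (A B : qschemoid) (F G : qmap A B) : Prop :=
  (forall a, fo F a = fo G a) /\ (forall f, fm F f = fm G f).

Definition qid (A : qschemoid) : qmap A A := QMap (A:=A) (B:=A) id id.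

Definition qcomp (A B C : qschemoid) (G : qmap B C) (F : qmap A B) : qmap A C :=
  QMap (fun a => fo G (fo F a)) (fun f => fm G (fm F f)).

(* The quasi-schemoid j(X,S) for the association scheme (X,S) with the
   trivial partition S = {1, sigma}: objects X, Hom(y,x) = {(x,y)},
   (z,x) \o (x,y) = (z,y); two morphisms are in the same block iff both
   are identities or both are non-identities. *)
Definition jtriv (X : finType) : qschemoid :=
  @QS X (X * X) (fun p => p.2) (fun p => p.1) (fun x => (x, x))
      (fun q p => (q.1, p.2))
      (fun p q => (p.1 == p.2) = (q.1 == q.2)).

(* The category [1] : objects false (= 0) and true (= 1), and a unique
   non-identity morphism 0 -> 1; I has the discrete partition. *)
Inductive Imor := Iid of bool | Iarr.

Definition Idom (f : Imor) : bool := match f with Iid b => b | Iarr => false end.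
Definition Icod (f : Imor) : bool := match f with Iid b => b | Iarr => true end.
Definition Icomp (g f : Imor) : Imor :=
  match g, f with
  | Iid _, _ => f
  | _, Iid _ => g
  | Iarr, Iarr => Iarr (* not composable; irrelevant *)
  end.

Definition Iqs : qschemoid :=
  @QS bool Imor Idom Icod Iid Icomp (fun f g => f = g).

Definition qprod (A B : qschemoid) : qschemoid :=
  @QS (ob A * ob B) (mor A * mor B)
      (fun f => (dom f.1, dom f.2))
      (fun f => (cod f.1, cod f.2))
      (fun a => (idm a.1, idm a.2))
      (fun g f => (comp g.1 f.1, comp g.2 f.2))
      (fun f g => sameblk f.1 g.1 /\ sameblk f.2 g.2).

Definition qeps (A : qschemoid) (i : bool) : qmap A (qprod A Iqs) :=
  QMap (A:=A) (B:=qprod A Iqs) (fun a => (a, i)) (fun f => (f, Iid i)).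

Definition homotopy (A B : qschemoid) (H : qmap (qprod A Iqs) B)
    (F G : qmap A B) : Prop :=
  [/\ is_qmorphism H, qeq (qcomp H (qeps A false)) F
    & qeq (qcomp H (qeps A true)) G].

Definition qsim (A B : qschemoid) (F G : qmap A B) : Prop :=
  (exists H, homotopy H F G) \/ (exists H, homotopy H G F).

Definition qhtpc (A B : qschemoid) : relation (qmap A B) :=
  clos_refl_trans (qmap A B) (@qsim A B).

Definition self_htpy_equiv (A : qschemoid) (F : qmap A A) : Prop :=
  is_qmorphism F /\
  exists G : qmap A A, [/\ is_qmorphism G,
     qhtpc (qcomp F G) (qid A) & qhtpc (qcomp G F) (qid A)].

Definition is_qiso (A B : qschemoid) (F : qmap A B) : Prop :=
  is_qmorphism F /\
  exists G : qmap B A, [/\ is_qmorphism G,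
     qeq (qcomp F G) (qid B) & qeq (qcomp G F) (qid A)].

From mathcomp Require Import all_boot.

(* A morphism j(X,S) -> j(X,S) is determined by its object map f, and
   preserving the two blocks means: f collapses one pair of distinct points
   iff it collapses all of them, so f is either injective or constant.  For a
   homotopy H : K => L the arrows (x,0) -> (x,1) all lie in one block, hence
   are sent into one block: either K x = L x for every x or for none.  If K is
   injective (a bijection, X being finite) and L were constant, some x would
   have K x = L x, forcing K = L; so injectivity is a homotopy invariant.
   From G F ~= 1 we get F injective, hence bijective, and its inverse is
   again a morphism. *)

Set Implicit Arguments.
Unset Strict Implicit.
Unset Printing Implicit Defensive.

Lemma is_qmorphism_qcomp (A B C : qschemoid) (G : qmap B C) (F : qmap A B) :
  is_qmorphism G -> is_qmorphism F -> is_qmorphism (qcomp G F).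
Proof.
case=> Gd Gc Gi Gcomp Gb [Fd Fc Fi Fcomp Fb]; split=> /= [f|f|a|f g dgf|f g fg].
- by rewrite Gd Fd.
- by rewrite Gc Fc.
- by rewrite Fi Gi.
- by rewrite Fcomp // Gcomp // Fd Fc dgf.
- exact/Gb/Fb.
Qed.

Lemma is_qmorphism_qeps (A : qschemoid) (i : bool) : is_qmorphism (qeps A i).
Proof. by split=> //= f g fg; split. Qed.

Lemma is_qmorphism_qeq (A B : qschemoid) (F G : qmap A B) :
  qeq F G -> is_qmorphism F -> is_qmorphism G.
Proof.
case=> eo em [Fd Fc Fi Fcomp Fb]; split=> [f|f|a|f g dgf|f g fg].
- by rewrite -em -eo.
- by rewrite -em -eo.
- by rewrite -em -eo.
- by rewrite -!em Fcomp.
- by rewrite -!em; apply: Fb.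
Qed.

Lemma homotopy_qmorphism_src (A B : qschemoid) (H : qmap (qprod A Iqs) B)
    (F G : qmap A B) : homotopy H F G -> is_qmorphism F.
Proof.
by case=> Hm HF _; apply: is_qmorphism_qeq HF (is_qmorphism_qcomp Hm _);
  apply: is_qmorphism_qeps.
Qed.

Lemma homotopy_qmorphism_tgt (A B : qschemoid) (H : qmap (qprod A Iqs) B)
    (F G : qmap A B) : homotopy H F G -> is_qmorphism G.
Proof.
by case=> Hm _ HG; apply: is_qmorphism_qeq HG (is_qmorphism_qcomp Hm _);
  apply: is_qmorphism_qeps.
Qed.

Section TrivialScheme.

Variable X : finType.

Lemma fm_jtriv (A : qschemoid) (F : qmap A (jtriv X)) :
  is_qmorphism F -> forall f, fm F f = (fo F (cod f), fo F (dom f)).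
Proof. by case=> Fd Fc _ _ _ f; rewrite -Fd -Fc; case: (fm F f). Qed.

Lemma jtriv_collapse (F : qmap (jtriv X) (jtriv X)) (x y u v : X) :
  is_qmorphism F -> x != y -> u != v ->
  (fo F x == fo F y) = (fo F u == fo F v).
Proof.
move=> Fm nxy nuv; have := Fm; case=> _ _ _ _ /(_ (x, y) (u, v)).
by rewrite !fm_jtriv //= (negbTE nxy) (negbTE nuv); apply.
Qed.

Lemma homotopy_jtriv_agree (H : qmap (qprod (jtriv X) Iqs) (jtriv X))
    (K L : qmap (jtriv X) (jtriv X)) (x y : X) :
  homotopy H K L -> (fo K x == fo L x) = (fo K y == fo L y).
Proof.
case=> Hm [HK _] [HL _].
have HK0 a : fo H (a, false) = fo K a := HK a.
have HL1 a : fo H (a, true) = fo L a := HL a.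
have := Hm; case=> _ _ _ _ /(_ ((x, x), Iarr) ((y, y), Iarr)).
rewrite !fm_jtriv //= !HK0 !HL1 !(eq_sym (fo K _)); apply.
by rewrite !eqxx.
Qed.

Lemma injective_agree (k l : X -> X) :
  injective k ->
  (forall x y, (k x == l x) = (k y == l y)) ->
  (forall x y u v, x != y -> u != v -> (l x == l y) = (l u == l v)) ->
  injective l.
Proof.
move=> k_inj agree collapse a b lab; have [//|nab] := eqVneq a b.
have l_const u : l u = l a.
  have [-> //|nua] := eqVneq u a.
  by apply/eqP; rewrite (collapse u a a b) // lab.
have [kinv _ kinvK] := injF_bij k_inj.
have k_eq_l x : k x = l x.
  by apply/eqP; rewrite (agree x (kinv (l a))) kinvK l_const.
by apply: k_inj; rewrite !k_eq_l.
Qed.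

Lemma homotopy_injective (H : qmap (qprod (jtriv X) Iqs) (jtriv X))
    (K L : qmap (jtriv X) (jtriv X)) :
  homotopy H K L -> injective (fo K) <-> injective (fo L).
Proof.
move=> hH; have Km := homotopy_qmorphism_src hH.
have Lm := homotopy_qmorphism_tgt hH.
split=> inj; apply: (injective_agree inj).
- by move=> x y; apply: homotopy_jtriv_agree hH.
- by move=> x y u v; apply: jtriv_collapse.
- by move=> x y; rewrite eq_sym (homotopy_jtriv_agree x y hH) eq_sym.
- by move=> x y u v; apply: jtriv_collapse.
Qed.

Lemma qhtpc_injective (K L : qmap (jtriv X) (jtriv X)) :
  qhtpc K L -> injective (fo K) <-> injective (fo L).
Proof.
elim=> [K' L' [[H hH]|[H hH]]|K'|K' L' M _ IH1 _ IH2].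
- exact: homotopy_injective hH.
- exact: iff_sym (homotopy_injective hH).
- by [].
- exact: iff_trans IH1 IH2.
Qed.

Lemma is_qiso_jtriv (F : qmap (jtriv X) (jtriv X)) :
  is_qmorphism F -> injective (fo F) -> is_qiso F.
Proof.
move=> Fm F_inj; split=> //.
pose finv := invF F_inj.
have finv_eq a b : (finv a == finv b) = (a == b).
  exact/inj_eq/(can_inj (f_invF F_inj)).
exists (QMap (A:=jtriv X) (B:=jtriv X) finv (fun p => (finv p.1, finv p.2))).
split.
- by split=> //= [[a b] [c d]] /=; rewrite !finv_eq.
- by split=> [a|[a b]] /=; rewrite ?fm_jtriv //= /finv !f_invF.
- by split=> [a|[a b]] /=; rewrite ?fm_jtriv //= /finv !invF_f.
Qed.

End TrivialScheme.

Theorem lemma4p1 (X : finType) (F : qmap (jtriv X) (jtriv X)) :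
  self_htpy_equiv F -> is_qiso F.
Proof.
case=> Fm [G [_ _ GF_id]].
have GF_inj : injective (fo (qcomp G F)).
  by apply/(qhtpc_injective GF_id).
exact: is_qiso_jtriv Fm (inj_compr GF_inj).
Qed.
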